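(* Let $A\in\mathbb{C}^{m\times n}$. Then the following are equivalent: (1) $A^{\mathfrak{m}}$ exists; (2) $\mathrm{rank}(AA^{\sim})=\mathrm{rank}(A^{\sim})$ and there exist $X\in\mathbb{C}^{m\times m}$ and a projector (idempotent matrix) $Y\in\mathbb{C}^{m\times m}$ such that $XAA^{\sim}-YX=I_m$, $AA^{\sim}X=XAA^{\sim}$ and $AA^{\sim}Y=0$. In this case, for any such $X$, $A^{\mathfrak{m}}=A^{\sim}X$.
   Context: For a positive integer $k$, the Minkowski metric matrix of order $k$ is $G_k=\mathrm{diag}(1,-I_{k-1})$ (with $G_1=(1)$). For $A\in\mathbb{C}^{m\times n}$, the Minkowski adjoint is $A^{\sim}=G_nA^*G_m$, where $A^*$ is the conjugate transpose. The Minkowski inverse of $A$, denoted $A^{\mathfrak{m}}$, is a matrix $Z\in\mathbb{C}^{n\times m}$ with $AZA=A$, $ZAZ=Z$, $(AZ)^{\sim}=AZ$, $(ZA)^{\sim}=ZA$ (unique if it exists). *)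

(* Complex matrices over an arbitrary numClosedFieldType C
   (algebraically closed field with conjugation, e.g. algC or complex R). *)
From HB Require Import structures.
From mathcomp Require Import all_boot all_order all_algebra.
Set Implicit Arguments. Unset Strict Implicit. Unset Printing Implicit Defensive.
Import Order.TTheory GRing.Theory Num.Theory.
Local Open Scope ring_scope.

Definition mink_G (C : numClosedFieldType) (k : nat) : 'M[C]_k :=
  \matrix_(i < k, j < k)
    (if i == j then (if (i : nat) == 0%N then 1 else -1) else 0).

Definition conjT (C : numClosedFieldType) (m n : nat) (A : 'M[C]_(m, n))
  : 'M[C]_(n, m) := (map_mx (fun z : C => z^*) A)^T.

Definition mink_adj (C : numClosedFieldType) (m n : nat) (A : 'M[C]_(m, n))
  : 'M[C]_(n, m) := mink_G C n *m conjT A *m mink_G C m.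

Definition is_mink_inv (C : numClosedFieldType) (m n : nat)
  (A : 'M[C]_(m, n)) (Z : 'M[C]_(n, m)) : Prop :=
  [/\ A *m Z *m A = A, Z *m A *m Z = Z,
      mink_adj (A *m Z) = A *m Z & mink_adj (Z *m A) = Z *m A].

Definition cond2_XY (C : numClosedFieldType) (m n : nat)
  (A : 'M[C]_(m, n)) (X Y : 'M[C]_m) : Prop :=
  [/\ Y *m Y = Y,
      X *m (A *m mink_adj A) - Y *m X = 1%:M,
      (A *m mink_adj A) *m X = X *m (A *m mink_adj A)
    & (A *m mink_adj A) *m Y = 0].

(* Only two properties of the Minkowski adjoint are used: it reverses products
   and is an involution, so the argument is carried out for any such adjoint.
   Put M = A A~.  If Z is a Minkowski inverse of A, then Z~ Z is the group
   inverse G of M, and G yields the pair X = G - (I - M G), Y = I - M G of (2);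
   moreover A~ = Z M gives the rank condition.  Conversely, the equations of
   (2) make X a commuting inner inverse of M (M X M = M, M X = X M), and the
   rank condition puts A~ in the row space of M, A~ = W M; these two facts
   suffice to check the four defining equations for A~ X.  Uniqueness is the
   usual argument for Moore-Penrose inverses. *)
From HB Require Import structures.
From mathcomp Require Import all_boot all_order all_algebra.
Set Implicit Arguments. Unset Strict Implicit. Unset Printing Implicit Defensive.
Import Order.TTheory GRing.Theory Num.Theory.
Local Open Scope ring_scope.

Definition group_inverse (R : pzRingType) m (M G : 'M[R]_m) : Prop :=
  [/\ M *m G *m M = M, G *m M *m G = G & M *m G = G *m M].

Section GroupInverse.

Variables (R : pzRingType) (m : nat) (M : 'M[R]_m).

Lemma group_inverse_cond2 G : group_inverse M G ->
  exists X Y : 'M[R]_m,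
    [/\ Y *m Y = Y, X *m M - Y *m X = 1%:M, M *m X = X *m M & M *m Y = 0].
Proof.
case=> MGM GMG MG_GM.
have MGMG : M *m G *m (M *m G) = M *m G by rewrite mulmxA MGM.
have MY0 : M *m (1%:M - M *m G) = 0 by rewrite mulmxBr mulmx1 MG_GM mulmxA MGM subrr.
have YM0 : (1%:M - M *m G) *m M = 0 by rewrite mulmxBl mul1mx MGM subrr.
have YG0 : (1%:M - M *m G) *m G = 0.
  by rewrite mulmxBl mul1mx MG_GM GMG subrr.
exists (G - (1%:M - M *m G)), (1%:M - M *m G); split.
- by rewrite mulmxBr mulmx1 mulmxBl mul1mx MGMG subrr subr0.
- rewrite mulmxBl YM0 subr0 mulmxBr YG0 sub0r mulmxBr mulmx1 mulmxBl mul1mx MGMG.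
  by rewrite subrr subr0 opprK MG_GM addrC subrK.
- by rewrite mulmxBr MY0 mulmxBl YM0 MG_GM.
- exact: MY0.
Qed.

Lemma inner_inverse_of_cond2 X Y :
  X *m M - Y *m X = 1%:M -> M *m Y = 0 -> M *m X *m M = M.
Proof.
move=> XMYX MY0; have := congr1 (mulmx M) XMYX.
by rewrite mulmxBr mulmx1 !mulmxA MY0 mul0mx subr0.
Qed.

End GroupInverse.

Lemma eq_mxrank_mulmx_factor (F : fieldType) m n p
    (A : 'M[F]_(m, n)) (B : 'M[F]_(n, p)) :
  \rank (A *m B) = \rank B -> exists W : 'M[F]_(n, m), B = W *m (A *m B).
Proof.
move=> rankAB; have sub_AB : (A *m B <= B)%MS by rewrite submxMl.
have : (B <= A *m B)%MS by rewrite -(mxrank_leqif_sup sub_AB).2 rankAB.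
by case/submxP=> W; exists W.
Qed.

Section AdjointInverse.

Variable R : fieldType.
Variable adj : forall m n, 'M[R]_(m, n) -> 'M[R]_(n, m).
Arguments adj {m n}.
Hypothesis adjM : forall m n p (A : 'M[R]_(m, n)) (B : 'M[R]_(n, p)),
  adj (A *m B) = adj B *m adj A.
Hypothesis adjK : forall m n (A : 'M[R]_(m, n)), adj (adj A) = A.

Definition adj_inverse m n (A : 'M[R]_(m, n)) (Z : 'M[R]_(n, m)) : Prop :=
  [/\ A *m Z *m A = A, Z *m A *m Z = Z,
      adj (A *m Z) = A *m Z & adj (Z *m A) = Z *m A].

Lemma adj_inverse_unique m n (A : 'M[R]_(m, n)) Z1 Z2 :
  adj_inverse A Z1 -> adj_inverse A Z2 -> Z1 = Z2.
Proof.
case=> AZA1 ZAZ1 AZ1 ZA1 [AZA2 ZAZ2 AZ2 ZA2].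
have adjA_AZ2 : adj A = adj A *m (A *m Z2) by rewrite -{1}AZA2 adjM AZ2.
have adjA_Z1A : adj A = Z1 *m A *m adj A by rewrite -{1}AZA1 -mulmxA adjM ZA1.
transitivity (Z1 *m A *m Z2).
  rewrite -{1}ZAZ1 -(mulmxA Z1) -AZ1 adjM adjA_AZ2 (mulmxA (adj Z1)) -adjM AZ1.
  by rewrite !mulmxA ZAZ1.
rewrite -{2}ZAZ2 -ZA2 adjM adjA_Z1A -(mulmxA (Z1 *m A)) -adjM ZA2.
by rewrite -(mulmxA (Z1 *m A)) ZAZ2.
Qed.

Lemma adj_commuting_inner_inverse m (M X : 'M[R]_m) :
  adj M = M -> M *m X *m M = M -> M *m X = X *m M -> adj (M *m X) = M *m X.
Proof.
move=> adjMM MXM MX_XM.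
have MX'_X'M : M *m adj X = adj X *m M.
  by have := congr1 adj MX_XM; rewrite !adjM adjMM => ->.
have MX'M : M *m adj X *m M = M.
  by have := congr1 adj MXM; rewrite !adjM adjMM mulmxA.
(* X~ M = X~ (M X M) = (M X~)(M X) = (M X~ M) X = M X *)
rewrite adjM adjMM -{1}MXM !mulmxA -(mulmxA _ X M) -MX_XM -MX'_X'M mulmxA.
by rewrite MX'M.
Qed.

Variables (m n : nat) (A : 'M[R]_(m, n)).
Local Notation M := (A *m adj A).

Lemma adj_gram : adj M = M.
Proof. by rewrite adjM adjK. Qed.

Lemma group_inverse_gram Z : adj_inverse A Z -> group_inverse M (adj Z *m Z).
Proof.
case=> AZA ZAZ AZ ZA.
have ZAA' : Z *m A *m adj A = adj A by rewrite -ZA -adjM mulmxA AZA.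
have AA'Z' : A *m adj A *m adj Z = A by rewrite -mulmxA -adjM ZA mulmxA AZA.
have MG : M *m (adj Z *m Z) = A *m Z by rewrite mulmxA AA'Z'.
have GM : adj Z *m Z *m M = A *m Z by rewrite -mulmxA (mulmxA Z) ZAA' -adjM AZ.
split; last by rewrite MG GM.
- by rewrite MG mulmxA AZA.
- by rewrite -(mulmxA (adj Z *m Z) M) MG -!mulmxA (mulmxA Z) ZAZ.
Qed.

Lemma rank_gram_of_adj_inverse Z : adj_inverse A Z -> \rank M = \rank (adj A).
Proof.
case=> AZA _ _ ZA.
have adjA_ZM : adj A = Z *m M by rewrite -{1}AZA -mulmxA adjM ZA -mulmxA.
by apply/eqP; rewrite eqn_leq mxrankM_maxr /= {1}adjA_ZM mxrankM_maxr.
Qed.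

Lemma adj_inverse_of_inner_inverse W X :
  adj A = W *m M -> M *m X *m M = M -> M *m X = X *m M ->
  adj_inverse A (adj A *m X).
Proof.
move=> adjA_WM MXM MX_XM.
have AZ_MX : A *m (adj A *m X) = M *m X by rewrite mulmxA.
have A_MW' : A = M *m adj W by rewrite -[LHS]adjK {1}adjA_WM adjM adj_gram.
move: (A *m adj A) adj_gram adjA_WM MXM MX_XM AZ_MX A_MW'.
move=> M' adjM' adjA_WM MXM MX_XM AZ_MX A_MW'.
have MXA : M' *m X *m A = A by rewrite {1}A_MW' mulmxA MXM -A_MW'.
have A'XM : adj A *m X *m M' = adj A by rewrite adjA_WM -!mulmxA (mulmxA M') MXM.
have ZA_WA : adj A *m X *m A = W *m A by rewrite adjA_WM -!mulmxA (mulmxA M') MXA.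
split.
- by rewrite AZ_MX MXA.
- by rewrite -!mulmxA AZ_MX !mulmxA A'XM.
- by rewrite AZ_MX adj_commuting_inner_inverse.
- by rewrite ZA_WA A_MW' !adjM adjK adjM' mulmxA.
Qed.

End AdjointInverse.

Section MinkowskiAdjoint.

Variable C : numClosedFieldType.

Lemma conjTM m n p (A : 'M[C]_(m, n)) (B : 'M[C]_(n, p)) :
  conjT (A *m B) = conjT B *m conjT A.
Proof. by rewrite /conjT map_mxM trmx_mul. Qed.

Lemma conjTK m n (A : 'M[C]_(m, n)) : conjT (conjT A) = A.
Proof. by apply/matrixP=> i j; rewrite !mxE conjCK. Qed.

Lemma conjT_mink_G k : conjT (mink_G C k) = mink_G C k.
Proof.
apply/matrixP=> i j; rewrite !mxE eq_sym; case: eqP => [->|_]; last by rewrite rmorph0.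
by case: ifP => _; rewrite ?rmorphN rmorph1.
Qed.

Lemma mink_G_sqr k : mink_G C k *m mink_G C k = 1%:M.
Proof.
apply/matrixP=> i j; rewrite !mxE (bigD1 i) //= big1 => [|l /negbTE nl]; last first.
  by rewrite !mxE eq_sym nl mul0r.
rewrite !mxE eqxx addr0; case: (i == j); last by rewrite mulr0.
by case: ifP => _; rewrite ?mulr1 // mulrNN mulr1.
Qed.

Lemma mink_adjM m n p (A : 'M[C]_(m, n)) (B : 'M[C]_(n, p)) :
  mink_adj (A *m B) = mink_adj B *m mink_adj A.
Proof.
rewrite /mink_adj conjTM !mulmxA; congr (_ *m _).
by rewrite -(mulmxA _ (mink_G C n) (mink_G C n)) mink_G_sqr mulmx1.
Qed.

Lemma mink_adjK m n (A : 'M[C]_(m, n)) : mink_adj (mink_adj A) = A.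
Proof.
rewrite /mink_adj !conjTM conjTK !conjT_mink_G !mulmxA mink_G_sqr mul1mx.
by rewrite -mulmxA mink_G_sqr mulmx1.
Qed.

End MinkowskiAdjoint.

Theorem theorem6p4 (C : numClosedFieldType) (m n : nat)
  (Hm : (0 < m)%N) (Hn : (0 < n)%N) (A : 'M[C]_(m, n)) :
  ((exists Z : 'M[C]_(n, m), is_mink_inv A Z) <->
   (\rank (A *m mink_adj A) = \rank (mink_adj A) /\
    exists X Y : 'M[C]_m, cond2_XY A X Y))
  /\
  (forall X Y : 'M[C]_m,
     \rank (A *m mink_adj A) = \rank (mink_adj A) -> cond2_XY A X Y ->
     is_mink_inv A (mink_adj A *m X) /\
     (forall Z : 'M[C]_(n, m), is_mink_inv A Z -> Z = mink_adj A *m X)).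
Proof.
(* Hm and Hn are unused: the argument works in every dimension, including 0. *)
have adjM := @mink_adjM C; have adjK := @mink_adjK C.
have cond2_inverse X Y : \rank (A *m mink_adj A) = \rank (mink_adj A) ->
    cond2_XY A X Y -> is_mink_inv A (mink_adj A *m X).
  move=> /eq_mxrank_mulmx_factor [W adjA_WM] [_ XMYX MX_XM MY0].
  apply: (adj_inverse_of_inner_inverse adjM adjK adjA_WM) MX_XM.
  exact: inner_inverse_of_cond2 XMYX MY0.
split.
  split=> [[Z AZ] | [rankM [X [Y XY]]]].
    split; first exact: (rank_gram_of_adj_inverse adjM AZ).
    exact: group_inverse_cond2 (group_inverse_gram adjM AZ).
  by exists (mink_adj A *m X); apply: cond2_inverse XY.
move=> X Y rankM XY; have AZ := cond2_inverse X Y rankM XY.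
by split=> // Z /(adj_inverse_unique adjM)/(_ AZ).
Qed.
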